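(* Let $n\ge 2$, let $T=\{1,\dots,n\}$ and let $\mathcal T$ be a topology on $T$. Fix an integer $k\ge 1$. Let $A,R,B,S\subseteq T\setminus\{n\}$ with $A\cap R=\emptyset$, $B\cap S=\emptyset$, where every point of $A$ and of $B$ is old (at stage $k$), and every point of $R$ and of $S$ is new (at stage $k$). Suppose $A\cup R\cup\{n\}$ and $B\cup S\cup\{n\}$ are two distinct new lower $k$-systems of $\mathcal T$. Then $A\cup\{n\}$ and $B\cup\{n\}$ are open in $\mathcal T$.
   Context: For $\alpha\in T$, $\alpha^{*}$ (the covering set of $\alpha$) denotes the smallest open set of $\mathcal T$ containing $\alpha$. For an integer $m\ge 0$, an $m$-system is an open set $P$ of $\mathcal T$ such that $P\setminus\{n\}$ has exactly $m$ points; it is upper if $n\notin P$ and lower if $n\in P$. For fixed $k$, a point $\alpha\neq n$ is called old if $\alpha^{*}$ is an $m$-system for some $m<k$, and new if $\alpha^{*}$ is a $k$-system. A $k$-system is called new if it contains at least one point $p\neq n$ that is not contained in any $m$-system with $m\le k-1$. *)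

From mathcomp Require Import all_boot.
Set Implicit Arguments. Unset Strict Implicit. Unset Printing Implicit Defensive.

Definition is_topology (T : finType) (tau : {set {set T}}) : Prop :=
  [/\ set0 \in tau, [set: T] \in tau,
      (forall F : {set {set T}}, F \subset tau -> \bigcup_(U in F) U \in tau)
    & (forall U V, U \in tau -> V \in tau -> U :&: V \in tau)].

(* covering set alpha^* : the smallest open set containing alpha
   (intersection of all open sets containing alpha). *)
Definition cover (T : finType) (tau : {set {set T}}) (a : T) : {set T} :=
  \bigcap_(U in tau | a \in U) U.

(* P is an m-system (top is the distinguished point n). *)
Definition msystem (T : finType) (tau : {set {set T}}) (top : T) (m : nat)
  (P : {set T}) : Prop :=
  P \in tau /\ #|P :\ top| = m.

Definition lower_msystem (T : finType) (tau : {set {set T}}) (top : T) (m : nat)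
  (P : {set T}) : Prop :=
  msystem tau top m P /\ top \in P.

Definition old_point (T : finType) (tau : {set {set T}}) (top : T) (k : nat)
  (a : T) : Prop :=
  a != top /\ exists m, m < k /\ msystem tau top m (cover tau a).

Definition new_point (T : finType) (tau : {set {set T}}) (top : T) (k : nat)
  (a : T) : Prop :=
  a != top /\ msystem tau top k (cover tau a).

Definition new_ksystem (T : finType) (tau : {set {set T}}) (top : T) (k : nat)
  (P : {set T}) : Prop :=
  msystem tau top k P /\
  exists p, [/\ p \in P, p != top &
    forall m (Q : {set T}), m <= k.-1 -> msystem tau top m Q -> p \notin Q].

From Pilot Require Import Defs.
From mathcomp Require Import all_boot.

Set Implicit Arguments.
Unset Strict Implicit.
Unset Printing Implicit Defensive.

(* Let P = A ∪ R ∪ {n} and Q be the two lower k-systems.  The open set P ∩ Q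
   contains n and no new point: a new r ∈ P ∩ Q would give
   k = |r^* \ {n}| <= |(P ∩ Q) \ {n}| <= |P \ {n}| = k, forcing P = P ∩ Q = Q.
   The covering set of an old point a ∈ A lies in P and contains no new point
   r, for it would contain r^*, which is too large.  Hence A ∪ {n} is the
   union of P ∩ Q and the covering sets a^*, a ∈ A. *)

Section CoveringSets.
Variables (T : finType) (tau : {set {set T}}) (top : T).

Lemma cover_min a U : U \in tau -> a \in U -> Defs.cover tau a \subset U.
Proof. by move=> U_open aU; apply: bigcap_inf; rewrite U_open aU. Qed.

Lemma mem_cover a : a \in Defs.cover tau a.
Proof. by apply/bigcapP => U /andP[]. Qed.

Lemma open_from_nbhs (X : {set T}) :
  is_topology tau ->
  (forall x, x \in X -> exists2 U, U \in tau & x \in U /\ U \subset X) ->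
  X \in tau.
Proof.
case=> _ _ open_bigcup _ nbhsX.
have -> : X = \bigcup_(U in [set U in tau | U \subset X]) U.
  apply/eqP; rewrite eqEsubset; apply/andP; split.
    apply/subsetP => x /nbhsX[U U_open [xU UX]].
    by apply/bigcupP; exists U; rewrite // inE U_open.
  by apply/bigcupsP => U; rewrite inE => /andP[].
by apply: open_bigcup; apply/subsetP => U; rewrite inE => /andP[].
Qed.

Lemma new_point_card k x U :
  new_point tau top k x -> U \in tau -> x \in U -> k <= #|U :\ top|.
Proof.
case=> _ [_ <-] U_open xU.
by apply/subset_leq_card/setSD/cover_min.
Qed.

Lemma new_point_notin_cover_old k a x :
  old_point tau top k a -> new_point tau top k x -> x \notin Defs.cover tau a.
Proof.
case=> _ [m [lt_mk [cover_open card_cover]]] x_new; apply/negP => x_cover.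
have := new_point_card x_new cover_open x_cover.
by rewrite card_cover leqNgt lt_mk.
Qed.

Lemma pointed_subset_eq (X Y : {set T}) :
  top \in X -> X \subset Y -> #|Y :\ top| <= #|X :\ top| -> X = Y.
Proof.
move=> topX subXY cardYX; have topY := subsetP subXY _ topX.
by rewrite -(setD1K topX) -(setD1K topY); congr (_ |: _); apply/eqP;
  rewrite eqEcard setSD.
Qed.

Lemma new_point_notin_setI k x (P Q : {set T}) :
  is_topology tau -> lower_msystem tau top k P -> lower_msystem tau top k Q ->
  P != Q -> new_point tau top k x -> x \notin P :&: Q.
Proof.
case=> _ _ _ open_setI [[P_open cardP] topP] [[Q_open cardQ] topQ] neqPQ x_new.
apply: contra neqPQ => xPQ.
have le_k_PQ := new_point_card x_new (open_setI _ _ P_open Q_open) xPQ.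
have topPQ : top \in P :&: Q by rewrite inE topP.
have <- : P :&: Q = P by apply: pointed_subset_eq; rewrite ?subsetIl ?cardP.
by apply/eqP/pointed_subset_eq; rewrite ?subsetIr ?cardQ.
Qed.

End CoveringSets.

Lemma lower_ksystem_old_part_open (T : finType) (tau : {set {set T}}) (top : T)
    k (A R Q : {set T}) :
  is_topology tau ->
  (forall a, a \in A -> old_point tau top k a) ->
  (forall r, r \in R -> new_point tau top k r) ->
  lower_msystem tau top k (top |: (A :|: R)) -> lower_msystem tau top k Q ->
  top |: (A :|: R) != Q ->
  top |: A \in tau.
Proof.
move=> tau_topology A_old R_new P_sys Q_sys neqPQ.
set P := top |: (A :|: R) in P_sys neqPQ *.
have [[P_open _] topP] := P_sys; have [[Q_open _] topQ] := Q_sys.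
have P_split y : y \in P -> y \notin R -> y \in top |: A.
  by rewrite !inE => /or3P[-> | -> | ->] //; rewrite orbT.
apply: open_from_nbhs => // x; rewrite !inE => /predU1P[-> | xA].
- exists (P :&: Q).
    by case: tau_topology => _ _ _ open_setI; apply: open_setI.
  split; first by rewrite inE topP.
  apply/subsetP => y yPQ; apply: P_split; first by case/setIP: yPQ.
  by apply: contraL yPQ => /R_new; apply: new_point_notin_setI.
- have [_ [_ [_ [cover_open _]]]] := A_old x xA.
  exists (Defs.cover tau x) => //; split; first exact: mem_cover.
  apply/subsetP => y y_cover; apply: P_split.
    by apply: subsetP y y_cover; apply: cover_min; rewrite // !inE xA orbT.
  apply: contraL y_cover => /R_new.
  exact: new_point_notin_cover_old (A_old x xA).
Qed.

Theorem lemma2 (n : nat) (hn : 2 <= n) (top : 'I_n) (htop : val top = n.-1)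
  (tau : {set {set 'I_n}}) (htau : is_topology tau) (k : nat) (hk : 1 <= k)
  (A R B S : {set 'I_n})
  (hA : top \notin A) (hR : top \notin R) (hB : top \notin B) (hS : top \notin S)
  (hAR : [disjoint A & R]) (hBS : [disjoint B & S])
  (hAold : forall a, a \in A -> old_point tau top k a)
  (hBold : forall a, a \in B -> old_point tau top k a)
  (hRnew : forall a, a \in R -> new_point tau top k a)
  (hSnew : forall a, a \in S -> new_point tau top k a)
  (hP : new_ksystem tau top k (top |: (A :|: R)))
  (hPl : lower_msystem tau top k (top |: (A :|: R)))
  (hQ : new_ksystem tau top k (top |: (B :|: S)))
  (hQl : lower_msystem tau top k (top |: (B :|: S)))
  (hPQ : top |: (A :|: R) != top |: (B :|: S)) :
  top |: A \in tau /\ top |: B \in tau.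
Proof.
split; first exact: lower_ksystem_old_part_open htau hAold hRnew hPl hQl hPQ.
by apply: (lower_ksystem_old_part_open htau hBold hSnew hQl hPl); rewrite eq_sym.
Qed.
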